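(* Let $U\in\mathcal{U}_c$ and suppose that $\eta_U$ is differentiable with $\eta_U'(x)/\eta_U(x)=o(1/x)$ as $x\to\infty$. Then \[ \frac{\omega_U'(x)}{\omega_U(x)}\le o(1/x)\quad\text{as } x\to\infty. \]
   Context: The class $\mathcal{U}$: $U(t)=u(e^{it})$ with $u$ real-valued continuous on $\mathbb{T}$, $u(z)=u(\bar z)$, smooth except possibly at $1$, $U$ even, increasing on $[0,\pi]$, $U(0)=0$, and $h_U(t):=\int_t^\pi U(x)x^{-2}dx\to\infty$ as $t\to0^+$. $\mathcal{U}_c$: those $U\in\mathcal{U}$ with $U'(t)/U(t)\le\alpha/t$ for $0<t\le\pi/2$ for some $0<\alpha<1$. $\eta_U$ is defined by $U(t)=e^{-\eta_U(|\log t|)}$ for $0<t\le1$ with $U(t)\le e^{-1}$; $\omega_U$ is the (increasing) function defined by $\eta_U(x/\omega_U(x))=\omega_U(x)$ for $x\ge0$ with $\eta_U(x)\ge1$. *)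

From HB Require Import structures.
From mathcomp Require Import all_boot all_order all_algebra.
From mathcomp Require Import all_classical all_reals all_analysis.
Set Implicit Arguments. Unset Strict Implicit. Unset Printing Implicit Defensive.
Import Order.TTheory GRing.Theory Num.Theory.
Import numFieldNormedType.Exports.
Local Open Scope classical_set_scope.
Local Open Scope ring_scope.

Fixpoint iter_derive {R : realType} (n : nat) (f : R -> R) : R -> R :=
  match n with
  | O => f
  | S m => derive1 (iter_derive m f)
  end.

(* The class U, written directly on U(t) = u(e^{it}):
   u continuous on T and u(z) = u(conj z)  <->  U continuous, 2pi-periodic, even;
   u smooth except possibly at 1 <-> U smooth off 2 pi Z. *)
Definition classU {R : realType} (U : R -> R) : Prop :=
  continuous U /\
  (forall t, U (t + 2 * pi) = U t) /\
  (forall t, U (- t) = U t) /\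
  (forall (n : nat) (t : R), (forall k : int, t != k%:~R * (2 * pi)) ->
      derivable (iter_derive n U) t 1) /\
  {in `[0, pi] &, {homo U : x y / x <= y}} /\
  U 0 = 0 /\
  ((fun t => (\int[lebesgue_measure]_(x in `[t, pi]) (U x / x ^+ 2)%:E)%E)
     @ 0^'+ --> +oo%E).

Definition classUc {R : realType} (U : R -> R) : Prop :=
  classU U /\
  exists alpha : R, 0 < alpha < 1 /\
    forall t, 0 < t <= pi / 2 -> derive1 U t / U t <= alpha / t.

(* eta_U : U(t) = exp(-eta_U(|log t|)) for 0 < t <= 1,
   i.e. eta_U(x) = - log U(e^{-x}) for x >= 0 *)
Definition etaU {R : realType} (U : R -> R) (x : R) : R :=
  - ln (U (expR (- x))).

From HB Require Import structures.
From mathcomp Require Import all_boot all_order all_algebra.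
From mathcomp Require Import all_classical all_reals all_analysis.
From mathcomp Require Import ring lra.
Set Implicit Arguments. Unset Strict Implicit. Unset Printing Implicit Defensive.
Import Order.TTheory GRing.Theory Num.Theory.
Import numFieldNormedType.Exports.
Local Open Scope classical_set_scope.
Local Open Scope ring_scope.

(* Since [U] is positive and nondecreasing, [eta_U] is nondecreasing, so [x / omega x] is the
   unique solution [y] of [y * eta_U y = x].  Hence [omega] is [eta_U] composed with the local
   inverse of [K t := t * eta_U t]; with [d := eta_U' y] the inverse function theorem gives
   [omega'/omega = d / (eta_U y * (eta_U y + y d))], and [|d y| <= o(1) eta_U y] turns this
   into [o(1) / (y eta_U y) = o(1 / x)]. *)

Lemma ge0_le_integral_nomeas (R : realType) d (T : measurableType d)
    (mu : {measure set T -> \bar R}) (D : set T) (f1 f2 : T -> \bar R) :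
  (forall x, D x -> (0 <= f1 x)%E) -> (forall x, D x -> (f1 x <= f2 x)%E) ->
  (\int[mu]_(x in D) f1 x <= \int[mu]_(x in D) f2 x)%E.
Proof.
move=> f1_ge0 f12.
have f2_ge0 x : D x -> (0 <= f2 x)%E by move=> Dx; exact: le_trans (f1_ge0 x Dx) (f12 x Dx).
rewrite !ge0_integralE//.
apply: ge_ereal_sup => _ [h hf1 <-]; apply: ereal_sup_ubound; exists h => // x.
apply: le_trans (hf1 x) _; rewrite /patch; case: ifP => // /[1!inE] Dx; exact: f12.
Qed.

Lemma integral_itv_le_cst (R : realType) (f : R -> R) (a b c : R) :
  a <= b -> (forall x, a <= x <= b -> 0 <= f x <= c) ->
  (\int[lebesgue_measure]_(x in `[a, b]) (f x)%:E <= (c * (b - a))%:E)%E.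
Proof.
move=> ab f_bd.
have /andP[fa_ge0 fa_le_c] : 0 <= f a <= c by apply: f_bd; rewrite lexx ab.
have c_ge0 := le_trans fa_ge0 fa_le_c.
apply: (@le_trans _ _ (\int[lebesgue_measure]_(x in `[a, b]) (cst c%:E) x)%E).
  by apply: ge0_le_integral_nomeas => x; rewrite /= in_itv /= => /f_bd /andP[? ?];
    rewrite lee_fin.
rewrite integral_cst //= lebesgue_measure_itv /= lte_fin.
case: ltP => _; last by rewrite mule0 lee_fin mulr_ge0 // subr_ge0.
by rewrite -EFinD -EFinM.
Qed.

Lemma inverse_derive_ratio_le (R : realFieldType) (d y w e : R) :
  0 < y -> 0 < w -> e < 1 -> `|d * y| <= e * w ->
  0 < w + y * d /\ d / (w + y * d) / w <= e / (y * w).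
Proof.
move=> y_gt0 w_gt0 e_lt1; rewrite ler_norml [y * d]mulrC => /andP[dy_ge dy_le].
have l_gt0 : 0 < w + d * y by nra.
split=> //; rewrite -mulrA -invfM ler_pdivrMr ?mulr_gt0 // mulrAC ler_pdivlMr ?mulr_gt0 //.
nra.
Qed.

Section ClassU.
Variables (R : realType) (U : R -> R).
Hypothesis HU : classU U.

Lemma classU_ge0 t : 0 <= t <= pi -> 0 <= U t.
Proof.
case: HU => _ [_ [_ [_ [U_homo [U0 _]]]]] /andP[t_ge0 t_le_pi].
by rewrite -U0; apply: U_homo; rewrite ?in_itv /= ?lexx ?pi_ge0 ?t_ge0.
Qed.

(* If [U t0 = 0] then [U] vanishes on [0, t0], so the integrals of [U x / x^2] stay bounded. *)
Lemma classU_gt0 t0 : 0 < t0 <= pi -> 0 < U t0.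
Proof.
case: (HU) => _ [_ [_ [_ [U_homo [_ U_int]]]]] /andP[t0_gt0 t0_le_pi].
rewrite lt_def classU_ge0 ?(ltW t0_gt0) // andbT; apply/eqP => Ut0.
have U0_on x : 0 <= x <= t0 -> U x = 0.
  move=> /andP[x_ge0 x_le_t0]; apply/eqP; rewrite eq_le classU_ge0 ?x_ge0 ?(le_trans x_le_t0) //.
  by rewrite andbT -Ut0 U_homo ?in_itv /= ?x_ge0 ?(ltW t0_gt0) ?(le_trans x_le_t0).
pose c := U pi / t0 ^+ 2.
have c_ge0 : 0 <= c by rewrite divr_ge0 ?classU_ge0 ?lexx ?pi_ge0 ?sqr_ge0.
have U_div_sqr_bd x : 0 < x <= pi -> 0 <= U x / x ^+ 2 <= c.
  move=> /andP[x_gt0 x_le_pi]; rewrite divr_ge0 ?classU_ge0 ?(ltW x_gt0) ?sqr_ge0 //=.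
  have [x_le_t0|t0_lt_x] := leP x t0; first by rewrite U0_on ?mul0r ?(ltW x_gt0).
  apply: ler_pM; rewrite ?classU_ge0 ?invr_ge0 ?sqr_ge0 ?x_le_pi ?(ltW x_gt0) //.
    by apply: U_homo; rewrite ?in_itv /= ?x_le_pi ?(ltW x_gt0) ?lexx ?pi_ge0.
  by rewrite lef_pV2 ?posrE ?exprn_gt0 //; nra.
near (0:R)^'+ => t.
have t_gt0 : 0 < t by near: t; exact: nbhs_right_gt.
have t_le_pi : t <= pi by apply: le_trans t0_le_pi; apply: ltW; near: t; exact: nbhs_right_lt.
have : ((c * pi + 1)%:E <= \int[lebesgue_measure]_(x in `[t, pi]) (U x / x ^+ 2)%:E)%E.
  by near: t; exact: (cvgey_ge U_int).
apply/negP; rewrite -ltNge.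
apply: le_lt_trans (integral_itv_le_cst t_le_pi _) _ => [x /andP[t_le_x x_le_pi]|].
  by apply: U_div_sqr_bd; rewrite x_le_pi (lt_le_trans t_gt0).
by rewrite lte_fin; nra.
Unshelve. all: by end_near.
Qed.

Lemma etaU_le y1 y2 : 0 <= y1 -> y1 <= y2 -> etaU U y1 <= etaU U y2.
Proof.
move=> y1_ge0 y12.
have exp_in (y : R) : 0 <= y -> 0 < expR (- y) <= pi.
  move=> y_ge0; rewrite expR_gt0 /=; apply: (le_trans _ (@pi_ge2 R)).
  by rewrite (@le_trans _ _ 1) ?expR_le1 ?oppr_le0 ?ler1n.
have /andP[e2_gt0 e2_le_pi] := exp_in _ (le_trans y1_ge0 y12).
have /andP[e1_gt0 e1_le_pi] := exp_in _ y1_ge0.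
case: HU => _ [_ [_ [_ [U_homo _]]]].
rewrite /etaU lerN2 ler_ln ?posrE ?classU_gt0 ?e1_gt0 ?e2_gt0 //.
by apply: U_homo; rewrite ?in_itv /= ?(ltW e1_gt0) ?(ltW e2_gt0) ?e1_le_pi ?e2_le_pi
  // ler_expR lerN2.
Qed.

Lemma etaU_fixpoint_unique x a b : 0 <= x -> 0 < a -> 0 < b ->
  etaU U (x / a) = a -> etaU U (x / b) = b -> a = b.
Proof.
move=> x_ge0 a_gt0 b_gt0.
wlog ab : a b a_gt0 b_gt0 / a <= b.
  by move=> W; have [/W|/ltW/W W'] := leP a b; [apply | move=> ? ?; rewrite W'].
move=> fix_a fix_b; apply/eqP; rewrite eq_le ab /= -[X in X <= _]fix_b -[X in _ <= X]fix_a.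
by apply: etaU_le; rewrite ?divr_ge0 ?(ltW b_gt0) // ler_wpM2l // lef_pV2 ?posrE.
Qed.

Lemma etaU_fixpoint_arg_cvgy (omega : R -> R) :
  (\forall x \near +oo, 0 < omega x /\ etaU U (x / omega x) = omega x) ->
  (fun x => x / omega x) @ +oo --> +oo.
Proof.
move=> omega_fix; apply/cvgryPgt => A; pose Y := Num.max A 0.
have Y_ge0 : 0 <= Y by rewrite le_max lexx orbT.
near=> x; have [w_gt0 fix_x] : 0 < omega x /\ etaU U (x / omega x) = omega x by near: x.
apply: (@le_lt_trans _ _ Y); first by rewrite le_max lexx.
rewrite ltNge; apply/negP => y_le_Y.
have x_gt : Y * (`|etaU U Y| + 1) < x by near: x; exact: nbhs_pinfty_gt (num_real _).
have x_ge0 : 0 <= x by apply: le_trans (ltW x_gt); rewrite mulr_ge0 ?addr_ge0.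
have w_le : omega x <= etaU U Y.
  by rewrite -fix_x; apply: etaU_le; rewrite ?divr_ge0 ?(ltW w_gt0).
have : x <= Y * (`|etaU U Y| + 1).
  rewrite -(divfK (lt0r_neq0 w_gt0) x) (le_trans (ler_wpM2r (ltW w_gt0) y_le_Y)) //.
  by rewrite ler_wpM2l // (le_trans w_le) // (le_trans (ler_norm _)) // lerDl.
by rewrite leNgt x_gt.
Unshelve. all: by end_near.
Qed.

Variable omega : R -> R.

Lemma is_derive_fixpoint y d :
  0 < y -> 0 < etaU U y ->
  (\forall s \near y * etaU U y, 0 < omega s /\ etaU U (s / omega s) = omega s) ->
  {near y, continuous (etaU U)} -> is_derive y 1 (etaU U) d ->
  etaU U y + y * d != 0 ->
  is_derive (y * etaU U y) 1 omega (d / (etaU U y + y * d)).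
Proof.
move=> y_gt0 eta_gt0 omega_fix eta_cont eta_d dK_neq0.
pose K := (@id R) * etaU U; pose Yf s := s / omega s.
have K_d : is_derive y 1 K (etaU U y + y * d).
  by apply: is_derive_eq; rewrite /GRing.scale /= mulr1 addrC.
have K_cont : {near y, continuous K}.
  by apply: filterS eta_cont => t; apply: continuousM.
have YfK : {near y, cancel K Yf}.
  near=> t.
  have t_gt0 : 0 < t by near: t; exact: lt_nbhsr.
  have etat_gt0 : 0 < etaU U t by near: t; apply: (cvgr_gt _ (nbhs_singleton eta_cont)).
  have [w_gt0 fix_Kt] : 0 < omega (K t) /\ etaU U (K t / omega (K t)) = omega (K t).
    by near: t; exact: (nbhs_singleton K_cont) omega_fix.
  have fix_eta : etaU U (K t / etaU U t) = etaU U t by rewrite /K /= mulfK ?gt_eqF.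
  have Kt_ge0 : 0 <= K t by rewrite mulr_ge0 ?(ltW t_gt0) ?(ltW etat_gt0).
  rewrite /Yf (etaU_fixpoint_unique Kt_ge0 w_gt0 etat_gt0 fix_Kt fix_eta).
  by rewrite /K /= mulfK ?gt_eqF.
have Yf_d : is_derive (K y) 1 Yf (etaU U y + y * d)^-1.
  exact: is_derive_inverse YfK K_cont K_d dK_neq0.
have YfKy : Yf (K y) = y := nbhs_singleton YfK.
have omegaE : \forall s \near K y, (etaU U \o Yf) s = omega s.
  by apply: filterS omega_fix => s [].
apply: near_eq_is_derive omegaE _.
by apply: is_derive1_comp; rewrite YfKy.
Unshelve. all: by end_near.
Qed.

Lemma fixpoint_derive_ratio_le e M N x :
  e < 1 ->
  (forall t, M < t -> derivable (etaU U) t 1 /\ `|derive1 (etaU U) t / etaU U t| <= e / t) ->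
  (forall s, N < s -> 0 < omega s /\ etaU U (s / omega s) = omega s) ->
  N < x -> M < x / omega x -> 0 < x / omega x ->
  derivable omega x 1 /\ derive1 omega x / omega x <= e / x.
Proof.
move=> e_lt1 eta_M omega_N x_gt_N y_gt_M y_gt0.
have [w_gt0 fix_x] := omega_N x x_gt_N.
set w := omega x in w_gt0 fix_x y_gt_M y_gt0 *; set y := x / w in fix_x y_gt_M y_gt0.
have [eta_dy eta_bdy] := eta_M y y_gt_M.
have xE : x = y * etaU U y by rewrite fix_x divfK ?gt_eqF.
have dy_le : `|derive1 (etaU U) y * y| <= e * w.
  rewrite normrM (gtr0_norm y_gt0); move: eta_bdy.
  by rewrite fix_x normrM normfV (gtr0_norm w_gt0) ler_pdivrMr // mulrAC ler_pdivlMr.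
have [l_gt0 ratio_le] := inverse_derive_ratio_le y_gt0 w_gt0 e_lt1 dy_le.
have omega_d : is_derive x 1 omega (derive1 (etaU U) y / (w + y * derive1 (etaU U) y)).
  have omega_fix_near :
      \forall s \near y * etaU U y, 0 < omega s /\ etaU U (s / omega s) = omega s.
    by rewrite -xE; near=> s; apply: omega_N; near: s; exact: lt_nbhsr x_gt_N.
  have eta_cont : {near y, continuous (etaU U)}.
    near=> t; apply/differentiable_continuous/derivable1_diffP.
    have t_gt_M : M < t by near: t; exact: lt_nbhsr y_gt_M.
    by have [] := eta_M t t_gt_M.
  have eta_d : is_derive y 1 (etaU U) (derive1 (etaU U) y).
    by rewrite derive1E; exact: derivableP.
  have := is_derive_fixpoint y_gt0 _ omega_fix_near eta_cont eta_d.
  by rewrite -xE fix_x; apply; rewrite ?gt_eqF.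
split; first by case: omega_d.
by rewrite derive1E; case: omega_d => _ ->; rewrite xE fix_x.
Unshelve. all: by end_near.
Qed.

End ClassU.

Theorem lemma6p4 (R : realType) (U : R -> R) (omega : R -> R) :
  classUc U ->
  (\forall x \near +oo, derivable (etaU U) x 1) ->
  (forall eps : R, 0 < eps ->
     \forall x \near +oo, `| derive1 (etaU U) x / etaU U x | <= eps / x) ->
  (\forall x \near +oo, 1 <= omega x /\ etaU U (x / omega x) = omega x) ->
  forall eps : R, 0 < eps ->
    \forall x \near +oo, derivable omega x 1 /\ derive1 omega x / omega x <= eps / x.
Proof.
move=> [HU _] eta_der eta_bd omega_fix eps eps_gt0.
pose e := Num.min (1 / 2) eps.
have e_gt0 : 0 < e by rewrite lt_min divr_gt0.
have e_lt1 : e < 1 by rewrite gt_min ltr_pdivrMr //; lra.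
have [M [_ eta_M]] : \forall t \near +oo,
    derivable (etaU U) t 1 /\ `|derive1 (etaU U) t / etaU U t| <= e / t.
  by near=> t; split; near: t; [exact: eta_der | exact: eta_bd e e_gt0].
have omega_fix0 : \forall s \near +oo, 0 < omega s /\ etaU U (s / omega s) = omega s.
  by apply: filterS omega_fix => s [/(lt_le_trans ltr01) ? ?].
have [N [_ omega_N]] := omega_fix0.
have /cvgryPgt arg_gt := etaU_fixpoint_arg_cvgy HU omega_fix0.
near=> x.
have x_gt_N : N < x by near: x; exact: nbhs_pinfty_gt (num_real N).
have x_gt0 : 0 < x by near: x; exact: nbhs_pinfty_gt.
have y_gt_M : M < x / omega x by near: x; exact: arg_gt.
have y_gt0 : 0 < x / omega x by near: x; exact: arg_gt.
have [omega_dx ratio_le] :=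
  fixpoint_derive_ratio_le HU e_lt1 eta_M omega_N x_gt_N y_gt_M y_gt0.
split=> //; apply: le_trans ratio_le _.
by rewrite ler_pM2r ?invr_gt0 // /e ge_min lexx orbT.
Unshelve. all: by end_near.
Qed.
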